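(* Let $G$ be a nonempty finite graph on $v$ vertices with $e$ edges, and let $s\ge2$ be an integer. (i) If $e>8D^2v^{1+1/s}$ for some $D>9\pi s/4$, then there exist two vertices $v_0,v_s$ such that $G$ contains more than $D^{2s}/4$ pairwise distinct trails of length $s$ from $v_0$ to $v_s$. (ii) The same conclusion holds if $G$ is bipartite with vertex classes of sizes $m$ and $n$ and $e>4D^2\min(m,n)^{1/s}\max(m,n)$ for some $D>9\pi s/4$.
   Context: A trail of length $s$ from $v_0$ to $v_s$ in a graph is a sequence $(v_0,\dots,v_s)$ of vertices such that $\{v_0,v_1\},\dots,\{v_{s-1},v_s\}$ are pairwise distinct edges of the graph (vertices may repeat). *)

From Stdlib Require Import Reals.
From mathcomp Require Import all_boot.

Set Implicit Arguments.
Unset Strict Implicit.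
Unset Printing Implicit Defensive.

Section Graphs.
Variable T : finType.

Definition simple_graph (g : rel T) : Prop := symmetric g /\ irreflexive g.

Definition edge_set (g : rel T) : {set {set T}} :=
  [set E : {set T} | [exists x, exists y, g x y && (E == [set x; y])]].

Definition num_edges (g : rel T) : nat := #|edge_set g|.

Definition is_trail (g : rel T) (p : seq T) : bool :=
  if p is x :: q then path g x q && uniq (pairmap (fun a b => [set a; b]) x q)
  else false.

(* Number of trails of length s (i.e. sequences (v_0,...,v_s)) from x to y. *)
Definition num_trails (g : rel T) (s : nat) (x y : T) : nat :=
  #|[set t : (s.+1).-tuple T | [&& is_trail g t, tnth t ord0 == x
                                  & tnth t ord_max == y]]|.

Definition bipartition (g : rel T) (A : {set T}) : Prop :=
  forall x y, g x y -> (x \in A) != (y \in A).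

End Graphs.

From Stdlib Require Import Reals Lra Psatz.
From mathcomp Require Import all_boot zify.

Set Implicit Arguments.
Unset Strict Implicit.
Unset Printing Implicit Defensive.

(* Deleting vertices of small degree one at a time leaves an induced subgraph of
   minimum degree d with 2d > c whenever the degree sum exceeds c times the number
   of vertices.  From a vertex of that subgraph, choosing each next vertex among its
   at least d - s - 1 unused neighbours yields (d - s - 1)^s paths with distinct
   vertices, and these are trails.  By pigeonhole a 1/v fraction of them share an
   endpoint, v being the number of possible endpoints: all vertices in general, and
   in the bipartite case the smaller class, to which the parity of s confines the
   endpoints for a suitable starting vertex.  Finally d > D^2 v^(1/s),
   D^2 > 2 s (s + 1) and Bernoulli's inequality give (d - s - 1)^s >= D^(2s) v / 2. *)

Section MinimumDegree.
Variables (T : finType) (g : rel T).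
Hypotheses (gsym : symmetric g) (girr : irreflexive g).

Definition deg_in (S : {set T}) (u : T) : nat := #|[set w in S | g u w]|.

Definition degree_sum (S : {set T}) : nat := \sum_(x in S) deg_in S x.

Lemma deg_inD1 (S : {set T}) (u x : T) :
  x != u -> deg_in S x = deg_in (S :\ u) x + (g x u && (u \in S)).
Proof.
move=> xu; rewrite /deg_in (cardsD1 u [set w in S | g x w]) inE addnC andbC.
by congr (_ + _); apply: eq_card => w; rewrite !inE; case: (w == u).
Qed.

Lemma degree_sumD1 (S : {set T}) (u : T) :
  u \in S -> degree_sum S = degree_sum (S :\ u) + 2 * deg_in S u.
Proof.
move=> uS; rewrite /degree_sum (big_setD1 _ uS) /=.
rewrite (eq_bigr (fun x => deg_in (S :\ u) x + g x u)); last first.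
  by move=> x; rewrite !inE => /andP[xu _]; rewrite (deg_inD1 S xu) uS andbT.
rewrite big_split /=.
have -> : \sum_(x in S :\ u) (g x u : nat) = deg_in S u.
  rewrite /deg_in -sum1_card big_mkcond [RHS]big_mkcond /=.
  apply: eq_bigr => x _; rewrite !inE.
  case: (eqVneq x u) => [->|_]; first by rewrite girr andbF.
  by rewrite gsym; case: (x \in S); case: (g u x).
lia.
Qed.

Lemma num_edges_le_degree_sum : num_edges g <= degree_sum setT.
Proof.
have sub : edge_set g \subset [set [set p.1; p.2] | p in [set p : T * T | g p.1 p.2]].
  apply/subsetP => E; rewrite inE => /existsP[x /existsP[y /andP[gxy /eqP ->]]].
  by apply/imsetP; exists (x, y); rewrite ?inE.
apply: leq_trans (subset_leq_card sub) _; apply: leq_trans (leq_imset_card _ _) _.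
rewrite -sum1_card (eq_bigl (fun p => g p.1 p.2)) => [|p]; last by rewrite inE.
rewrite -(pair_big_dep predT (fun x y => g x y) (fun _ _ => 1)) /=.
apply: eq_leq; apply: eq_big => [x|x _]; first by rewrite inE.
by rewrite /deg_in -sum1_card; apply: eq_bigl => y; rewrite !inE.
Qed.

Local Open Scope R_scope.

Lemma min_degree_subset (c : R) (S : {set T}) :
  c * INR #|S| < INR (degree_sum S) ->
  exists (S' : {set T}) (d : nat) (x : T),
    [/\ x \in S', c < 2 * INR d & forall u, u \in S' -> (d <= deg_in S' u)%N].
Proof.
have [n] := ubnP #|S|; elim: n S => // n IH S; rewrite ltnS => leS dense.
case: (set_0Vmem S) => [S0|[x xS]].
  by move: dense; rewrite S0 /degree_sum big_set0 cards0 /=; lra.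
case: (@arg_minnP _ x (fun y => y \in S) (deg_in S) xS) => m mS minm.
case: (Rlt_le_dec c (2 * INR (deg_in S m))) => [large|small].
  by exists S, (deg_in S m), m; split.
apply: (IH (S :\ m)); first by move: leS; rewrite (cardsD1 m S) mS.
by move: dense; rewrite (degree_sumD1 mS) (cardsD1 m S) mS !plus_INR /=; lra.
Qed.

End MinimumDegree.

Section AvoidingPaths.
Variables (T : finType) (g : rel T).

(* The tails q of the paths x :: q with n edges inside S whose new vertices are
   pairwise distinct and avoid V. *)
Fixpoint avoiding_paths (S : {set T}) (n : nat) (x : T) (V : seq T) : seq (seq T) :=
  if n is n'.+1 then
    [seq y :: q | y <- enum [pred y | (y \in S) && g x y && (y \notin V)],
                  q <- avoiding_paths S n' y (y :: V)]
  else [:: [::]].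

Lemma avoiding_pathsP (S : {set T}) n x V q : q \in avoiding_paths S n x V ->
  [/\ size q = n, path g x q, uniq q & all (fun y => y \notin V) q].
Proof.
elim: n x V q => [|n IH] x V q /=; first by rewrite inE => /eqP ->.
case/allpairsPdep => [y [r [yN rP ->]]].
move: yN; rewrite mem_enum => /andP[/andP[_ gxy] yV].
case: (IH _ _ _ rP) => sr pr ur /allP ar.
have yr : y \notin r by apply/negP => /ar; rewrite inE eqxx.
split; rewrite /= ?sr ?gxy ?yr ?yV //; apply/allP => z /ar.
by rewrite inE negb_or => /andP[].
Qed.

Lemma uniq_avoiding_paths (S : {set T}) n x V : uniq (avoiding_paths S n x V).
Proof.
elim: n x V => [|n IH] x V //=.
apply: allpairs_uniq_dep => //; first exact: enum_uniq.
by move=> [a q] [b r] _ _ /= [-> ->].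
Qed.

Lemma deg_in_le_avoiding (S : {set T}) x (V : seq T) :
  deg_in g S x <= #|[pred y | (y \in S) && g x y && (y \notin V)]| + size V.
Proof.
set N := [pred y | _].
apply: leq_trans (leq_add (leqnn #|N|) (card_size V)); rewrite -cardUI.
apply: leq_trans (leq_addr _ _); apply: subset_leq_card; apply/subsetP => y.
by rewrite !inE => /andP[-> ->]; case: (y \in V).
Qed.

Lemma size_avoiding_paths (S : {set T}) d :
  (forall u, u \in S -> d <= deg_in g S u) ->
  forall n x V, x \in S -> (d - (size V + n)) ^ n <= size (avoiding_paths S n x V).
Proof.
move=> mindeg; elim=> [|n IH] x V xS //=.
rewrite size_allpairs_dep sumnE big_map expnS.
set N := [pred y | _].
have cardN : d - size V <= size (enum N).
  rewrite -cardE leq_subLR addnC; apply: leq_trans (mindeg x xS) _.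
  exact: deg_in_le_avoiding.
apply: (@leq_trans (size (enum N) * (d - (size V + n.+1)) ^ n)).
  by apply: leq_mul => //; apply: leq_trans cardN; apply: leq_sub2l; rewrite leq_addr.
rewrite -sum1_size big_distrl !big_seq /=; apply: leq_sum => y.
rewrite mem_enum mul1n => /andP[/andP[yS _] _].
by have := IH y (y :: V) yS; rewrite /= addSn -addnS.
Qed.

Lemma pairmap_set2_sub x q (E : {set T}) :
  E \in pairmap (fun a b => [set a; b]) x q -> {subset E <= x :: q}.
Proof.
elim: q x => [|y q IH] x //=; rewrite inE => /orP[/eqP -> w|/IH Eyq w /Eyq wyq].
  by rewrite !inE => /orP[] ->; rewrite ?orbT.
by rewrite in_cons wyq orbT.
Qed.

Lemma trail_of_uniq_path x q : path g x q -> uniq (x :: q) -> is_trail g (x :: q).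
Proof.
rewrite /is_trail => -> /=; elim: q x => [|y q IH] x //=.
rewrite !inE negb_or => /andP[/andP[xy xq]] /andP[yq uq].
rewrite IH ?yq // andbT; apply/negP => /pairmap_set2_sub/(_ x (set21 x y)).
by rewrite inE (negbTE xy) (negbTE xq).
Qed.

End AvoidingPaths.

Lemma pigeonhole_count (T : finType) (A : eqType) (f : A -> T) (B : {set T})
    (L : seq A) (y0 : T) :
  {in L, forall a, f a \in B} ->
  exists y, size L <= #|B| * count (fun a => f a == y) L.
Proof.
move=> LB.
(* [y0] is the witness when B, hence L, is empty. *)
have sizeL : size L = \sum_(y in B) count (fun a => f a == y) L.
  elim: L LB => [|a L IH] LB /=; first by rewrite big1.
  rewrite big_split /= -IH => [|b bL]; last by apply: LB; rewrite inE bL orbT.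
  rewrite (big_setD1 (f a)) ?LB ?mem_head //= eqxx big1 // => y.
  by rewrite !inE => /andP[ya _]; rewrite eq_sym (negbTE ya).
case: (set_0Vmem B) => [B0|[y1 y1B]]; first by exists y0; rewrite sizeL B0 big_set0.
exists [arg max_(y > y1 in B) count (fun a => f a == y) L].
case: arg_maxnP => // ym _ maxm.
by rewrite sizeL -sum_nat_const; apply: leq_sum.
Qed.

Section Trails.
Variables (T : finType) (g : rel T).

Lemma count_last_le_num_trails s x y (L : seq (seq T)) : uniq L ->
  (forall q, q \in L -> size q = s /\ is_trail g (x :: q)) ->
  count (fun q => last x q == y) L <= num_trails g s x y.
Proof.
move=> uL HL.
pose t (q : seq T) : s.+1.-tuple T := insubd (nseq_tuple s.+1 x) (x :: q).
have val_t q : q \in L -> val (t q) = x :: q.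
  by move=> qL; rewrite val_insubd /= (HL q qL).1 eqxx.
rewrite -size_filter -(size_map t) /num_trails cardE; apply: uniq_leq_size.
  rewrite map_inj_in_uniq ?filter_uniq // => q r.
  rewrite !mem_filter => /andP[_ qL] /andP[_ rL] /(congr1 val).
  by rewrite !val_t // => -[].
move=> z /mapP [q]; rewrite mem_filter => /andP[/eqP lq qL] ->.
rewrite mem_enum inE (tnth_nth x) (tnth_nth x) val_t // (HL q qL).2 /= eqxx /=.
by apply/eqP; rewrite -(HL q qL).1 -lq; apply: (nth_last x (x :: q)).
Qed.

Lemma bipartition_last (A : {set T}) x q : bipartition g A -> path g x q ->
  (last x q \in A) = (x \in A) (+) odd (size q).
Proof.
move=> bip; elim: q x => [|y q IH] x /=; first by rewrite addbF.
case/andP=> gxy /IH ->; move: (bip _ _ gxy).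
by case: (x \in A); case: (y \in A); case: (odd (size q)).
Qed.

Lemma trails_of_min_degree (S B : {set T}) d s x :
  x \in S -> (forall u, u \in S -> d <= deg_in g S u) ->
  (forall q, path g x q -> size q = s -> last x q \in B) ->
  exists y, (d - s.+1) ^ s <= #|B| * num_trails g s x y.
Proof.
move=> xS mindeg endB; set L := avoiding_paths g S s x [:: x].
have trailL q : q \in L -> size q = s /\ is_trail g (x :: q).
  case/avoiding_pathsP=> sq pq uq /allP xq; split=> //.
  by apply: trail_of_uniq_path; rewrite //= uq andbT; apply/negP => /xq; rewrite inE eqxx.
have [y cnt] : exists y, size L <= #|B| * count (fun q => last x q == y) L.
  by apply: (@pigeonhole_count _ _ _ _ _ x) => q /avoiding_pathsP[sq pq _ _]; apply: endB.
exists y; have := size_avoiding_paths mindeg s [:: x] xS; rewrite add1n.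
move/leq_trans/(_ cnt)/leq_trans; apply; apply: leq_mul => //.
exact: count_last_le_num_trails (uniq_avoiding_paths _ _ _ _ _) trailL.
Qed.

Lemma bipartitionC (A : {set T}) : bipartition g A -> bipartition g (~: A).
Proof. by move=> bip x y /bip; rewrite !inE; case: (x \in A); case: (y \in A). Qed.

Lemma min_degree_meets_classes (A S : {set T}) d x0 (b : bool) :
  bipartition g A -> x0 \in S -> (0 < d)%N ->
  (forall u, u \in S -> (d <= deg_in g S u)%N) ->
  exists2 x, x \in S & (x \in A) = b.
Proof.
move=> bip x0S d0 mindeg.
have /card_gt0P[x1] : (0 < deg_in g S x0)%N by apply: leq_trans d0 (mindeg _ x0S).
rewrite inE => /andP[x1S /bip x01].
case: (eqVneq (x0 \in A) b) => [|x0b]; first by exists x0.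
by exists x1 => //; move: x0b x01; case: (x0 \in A); case: (x1 \in A); case: b.
Qed.

End Trails.

Local Open Scope R_scope.

Lemma bernoulli_one_sub (t : R) (n : nat) : 0 <= t <= 1 -> 1 - INR n * t <= (1 - t) ^ n.
Proof.
move=> t01; elim: n => [|n IH]; first by rewrite /=; lra.
rewrite S_INR /=; have := pos_INR n; nra.
Qed.

Lemma half_le_pow_one_sub (t : R) (n : nat) :
  0 <= t -> 2 * INR n * t <= 1 -> / 2 <= (1 - t) ^ n.
Proof.
case: n => [|n] t0 small; first by rewrite /=; lra.
have n1 : 1 <= INR n.+1 by rewrite S_INR; have := pos_INR n; lra.
have := @bernoulli_one_sub t n.+1; nra.
Qed.

Lemma sq_gt_of_PI_bound (s : nat) (D : R) :
  (2 <= s)%N -> 9 * PI * INR s / 4 < D -> 2 * INR s * (INR s + 1) < D ^ 2.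
Proof.
move=> s2 hD; have s2R : 2 <= INR s by apply: (le_INR 2); apply/leP.
have PI3 : 3 < PI by have := PI2_3_2; lra.
have : 27 * INR s / 4 < D by nra.
nra.
Qed.

Lemma trail_count_bound (s : nat) (D w d num : R) :
  (2 <= s)%N -> 9 * PI * INR s / 4 < D -> 1 <= w -> D ^ 2 * w < d ->
  (d - INR s - 1) ^ s <= w ^ s * num -> D ^ (2 * s) / 4 < num.
Proof.
move=> s2 hD w1 hd hnum.
have Dsq := sq_gt_of_PI_bound s2 hD.
have s2R : 2 <= INR s by apply: (le_INR 2); apply/leP.
have D2pos : 0 < D ^ 2 by nra.
set t := (INR s + 1) / D ^ 2.
have tD : t * D ^ 2 = INR s + 1.
  by rewrite /t /Rdiv Rmult_assoc Rinv_l ?Rmult_1_r //; lra.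
have t0 : 0 <= t by nra.
have st : 2 * INR s * t <= 1 by nra.
have t1 : t <= 1 / 2 by nra.
have base : 0 <= D ^ 2 * (1 - t) * w <= d - INR s - 1 by nra.
have half := half_le_pow_one_sub t0 st.
have ws : 0 < w ^ s by apply pow_lt; lra.
have D2s : 0 < D ^ (2 * s) by rewrite pow_mult; apply pow_lt.
have : D ^ (2 * s) * (1 - t) ^ s * w ^ s <= w ^ s * num.
  apply: Rle_trans hnum; rewrite pow_mult -!Rpow_mult_distr.
  exact: pow_incr.
move=> H; suff : D ^ (2 * s) / 2 <= num by lra.
apply: (Rmult_le_reg_l (w ^ s)) => //; apply: Rle_trans H.
have := Rmult_lt_0_compat _ _ D2s ws; nra.
Qed.

Lemma INR_expn (m n : nat) : INR (m ^ n) = INR m ^ n.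
Proof. by elim: n => [|n IH] //=; rewrite expnS mult_INR IH. Qed.

Lemma Rpower_ge1 (v c : R) : 1 <= v -> 0 <= c -> 1 <= Rpower v c.
Proof.
by move=> v1 c0; rewrite -(Rpower_O v); [apply: Rle_Rpower | lra].
Qed.

Lemma Rpower_inv_pow (v : R) (s : nat) : 0 < v -> (0 < s)%N -> Rpower v (1 / INR s) ^ s = v.
Proof.
move=> v0 s0; have sR : 0 < INR s by apply: lt_0_INR; apply/ltP.
rewrite -Rpower_pow ?Rpower_mult; last by apply: exp_pos.
by rewrite /Rdiv Rmult_1_l Rinv_l ?Rpower_1 //; lra.
Qed.

Section ManyTrails.
Variables (T : finType) (g : rel T) (s : nat) (D : R).
Hypotheses (gsym : symmetric g) (girr : irreflexive g).
Hypotheses (s2 : (2 <= s)%N) (hD : 9 * PI * INR s / 4 < D).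

Lemma many_trails_of_min_degree (w : R) (S B : {set T}) d x :
  1 <= w -> w ^ s = INR #|B| -> D ^ 2 * w < INR d ->
  x \in S -> (forall u, u \in S -> (d <= deg_in g S u)%N) ->
  (forall q, path g x q -> size q = s -> last x q \in B) ->
  exists y, D ^ (2 * s) / 4 < INR (num_trails g s x y).
Proof.
move=> w1 ws hd xS mindeg endB.
have [y /leP/le_INR cnt] := trails_of_min_degree xS mindeg endB.
exists y; apply: (trail_count_bound s2 hD w1 hd).
have ds : (s.+1 <= d)%N.
  have s2R : 2 <= INR s by apply: (le_INR 2); apply/leP.
  have Dsq := sq_gt_of_PI_bound s2 hD.
  by apply/leP; apply: INR_le; rewrite S_INR; nra.
have -> : INR d - INR s - 1 = INR d - INR s.+1 by rewrite S_INR; ring.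
by rewrite ws -minus_INR -?INR_expn -?mult_INR; last exact/leP.
Qed.

Lemma dense_min_degree_subset (c : R) :
  c * INR #|T| < INR (num_edges g) ->
  exists (S : {set T}) (d : nat) (x : T),
    [/\ x \in S, c < 2 * INR d & forall u, u \in S -> (d <= deg_in g S u)%N].
Proof.
move=> dense; apply: (@min_degree_subset _ _ gsym girr c setT); rewrite cardsT.
by apply: Rlt_le_trans dense _; apply: le_INR; apply/leP; apply: num_edges_le_degree_sum.
Qed.

Lemma many_trails_of_dense : (0 < #|T|)%N ->
  8 * D ^ 2 * Rpower (INR #|T|) (1 + 1 / INR s) < INR (num_edges g) ->
  exists x y, D ^ (2 * s) / 4 < INR (num_trails g s x y).
Proof.
move=> Tpos dense.
have v1 : 1 <= INR #|T| by apply: (le_INR 1); apply/leP.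
have sR : 0 < INR s by apply: (lt_INR 0); apply/ltP; exact: ltnW s2.
set w := Rpower (INR #|T|) (1 / INR s).
have w1 : 1 <= w by apply: Rpower_ge1 => //; apply: Rlt_le; apply: Rdiv_lt_0_compat; lra.
have ws : w ^ s = INR #|[set: T]|.
  by rewrite cardsT; apply: Rpower_inv_pow (ltnW s2); lra.
have dense' : 8 * D ^ 2 * w * INR #|T| < INR (num_edges g).
  move: dense; rewrite Rpower_plus Rpower_1; last lra.
  by have -> : 8 * D ^ 2 * w * INR #|T| = 8 * D ^ 2 * (INR #|T| * w) by ring.
have [S [d [x [xS hd mindeg]]]] := dense_min_degree_subset dense'.
have D2w : 0 <= D ^ 2 * w by apply: Rmult_le_pos; [apply: pow2_ge_0 | lra].
have hd' : D ^ 2 * w < INR d by lra.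
have [y many] := many_trails_of_min_degree w1 ws hd' xS mindeg
  (fun q _ _ => in_setT (last x q)).
by exists x, y.
Qed.

Lemma many_trails_of_dense_bipartite_le (A : {set T}) :
  bipartition g A -> (#|A| <= #|~: A|)%N ->
  4 * D ^ 2 * Rpower (INR #|A|) (1 / INR s) * INR #|~: A| < INR (num_edges g) ->
  exists x y, D ^ (2 * s) / 4 < INR (num_trails g s x y).
Proof.
move=> bip le dense.
set w := Rpower (INR #|A|) (1 / INR s).
have D2w : 0 < D ^ 2 * w.
  apply: Rmult_lt_0_compat; last exact: exp_pos.
  by have := sq_gt_of_PI_bound s2 hD; have := pos_INR s; nra.
have dense' : 2 * D ^ 2 * w * INR #|T| < INR (num_edges g).
  have : (#|T| <= 2 * #|~: A|)%N by rewrite -(cardsC A); lia.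
  move/leP/le_INR; rewrite mult_INR -/w (_ : INR 2 = 2) => [hT|]; last by rewrite /=; lra.
  move: dense; rewrite -/w; nra.
have [S [d [x0 [x0S hd mindeg]]]] := dense_min_degree_subset dense'.
have d0 : (0 < d)%N by apply/ltP; apply: (INR_lt 0); rewrite /=; lra.
have [x xS xA] := min_degree_meets_classes (~~ odd s) bip x0S d0 mindeg.
have [a aS aA] := min_degree_meets_classes true bip x0S d0 mindeg.
have A1 : 1 <= INR #|A| by apply: (le_INR 1); apply/leP/card_gt0P; exists a.
have sR : 0 < INR s by apply: (lt_INR 0); apply/ltP; exact: ltnW s2.
have w1 : 1 <= w by apply: Rpower_ge1 => //; apply: Rlt_le; apply: Rdiv_lt_0_compat; lra.
have ws : w ^ s = INR #|A| by apply: Rpower_inv_pow (ltnW s2); lra.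
have hd' : D ^ 2 * w < INR d by lra.
have [y many] : exists y, D ^ (2 * s) / 4 < INR (num_trails g s x y).
  apply: (many_trails_of_min_degree w1 ws hd' xS mindeg) => q pq sq.
  by rewrite (bipartition_last bip pq) sq xA; case: (odd s).
by exists x, y.
Qed.

Lemma many_trails_of_dense_bipartite (A : {set T}) :
  bipartition g A ->
  4 * D ^ 2 * Rpower (INR (minn #|A| #|~: A|)) (1 / INR s) * INR (maxn #|A| #|~: A|)
    < INR (num_edges g) ->
  exists x y, D ^ (2 * s) / 4 < INR (num_trails g s x y).
Proof.
move=> bip; case: leqP => [le|/ltnW le]; first exact: many_trails_of_dense_bipartite_le.
have := @many_trails_of_dense_bipartite_le (~: A); rewrite setCK.
by apply=> //; apply: bipartitionC.
Qed.

End ManyTrails.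

Theorem theorem5p3 (T : finType) (g : rel T) (s : nat) :
  simple_graph g -> (0 < #|T|)%N -> (2 <= s)%N ->
  (* (i) *)
  (forall D : R,
     D > 9 * PI * INR s / 4 ->
     INR (num_edges g) > 8 * D ^ 2 * Rpower (INR #|T|) (1 + 1 / INR s) ->
     exists x y : T, INR (num_trails g s x y) > D ^ (2 * s)%N / 4)
  /\
  (* (ii) *)
  (forall (A : {set T}) (D : R),
     bipartition g A ->
     D > 9 * PI * INR s / 4 ->
     INR (num_edges g) >
        4 * D ^ 2 * Rpower (INR (minn #|A| #|~: A|)) (1 / INR s)
          * INR (maxn #|A| #|~: A|) ->
     exists x y : T, INR (num_trails g s x y) > D ^ (2 * s)%N / 4).
Proof.
move=> [gsym girr] Tpos s2; split=> [D hD | A D bip hD].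
  exact: many_trails_of_dense.
exact: many_trails_of_dense_bipartite.
Qed.
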